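(* Let $G=(V,E)$ be a graph and let $R$ be $E_{\mathbb{K}}[\mathrm{HSTAB}(G)]$ (resp. $E_{\mathbb{K}}[\mathrm{QSTAB}(G)]$, resp. $E_{\mathbb{K}}[\mathrm{TSTAB}(G)]$). If there are maximal cliques (resp. maximal cliques, resp. maximal elements of $\mathcal K(G)$) $K_1,K_2$ with $\#K_1>\#K_2$, then $\operatorname{tr}(\omega_R)\subseteq R_{\ge \#K_1-\#K_2}=\bigoplus_{n\ge\#K_1-\#K_2}R_n$.
   Context: $\mathrm{HSTAB}(G)$ is the set of $f\in\mathbb{R}^V$ with $0\le f(x)\le 1$ for all $x$, $\sum_{x\in K}f(x)\le1$ for every clique $K$, and $\sum_{x\in C}f(x)\le(\#C-1)/2$ for every odd cycle $C$; $\mathrm{QSTAB}(G)$ uses only the first two conditions; $\mathrm{TSTAB}(G)$ uses the first and third conditions and $\sum_{x\in e}f(x)\le1$ for every edge $e$. $\mathcal K(G)$ is the set of cliques of $G$ of size at most $3$. For a rational polytope $\mathcal P\subset\mathbb{R}^V$, with $V^-=V\cup\{-\infty\}$, $T^f=\prod_{x\in V^-}T_x^{f(x)}$, $\deg T_x=0$ ($x\in V$), $\deg T_{-\infty}=1$, the Ehrhart ring over a field $\mathbb{K}$ is $E_{\mathbb{K}}[\mathcal P]=\mathbb{K}[T^f\mid f\in\mathbb{Z}^{V^-}, f(-\infty)>0, f|_V/f(-\infty)\in\mathcal P]$; it is a normal Cohen–Macaulay graded domain with canonical module $\omega_R$. $\operatorname{tr}(M)=\sum_{\varphi\in\operatorname{Hom}_R(M,R)}\varphi(M)$.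 *)

(* graphs on 'I_n, Ehrhart rings as subsets of the
   polynomial ring {mpoly Kf[n.+1]} (variable ord_max = T_{-oo}). *)
From HB Require Import structures.
From mathcomp Require Import all_boot all_order all_algebra.
From mathcomp Require Import mpoly.
From Stdlib Require List.
Set Implicit Arguments. Unset Strict Implicit. Unset Printing Implicit Defensive.
Import Order.TTheory GRing.Theory Num.Theory.
Local Open Scope ring_scope.

Inductive stab_kind := HSTAB | QSTAB | TSTAB.

Definition is_clique n (e : rel 'I_n) (K : {set 'I_n}) : bool :=
  [forall x in K, forall y in K, (x != y) ==> e x y].

Definition maximal_clique n (e : rel 'I_n) (K : {set 'I_n}) : bool :=
  is_clique e K &&
  [forall K' : {set 'I_n}, (is_clique e K' && (K \subset K')) ==> (K' == K)].

(* maximal element of calK(G) = cliques of size at most 3 *)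
Definition maximal_K3 n (e : rel 'I_n) (K : {set 'I_n}) : bool :=
  [&& is_clique e K, (#|K| <= 3)%N &
  [forall K' : {set 'I_n},
     [&& is_clique e K', (#|K'| <= 3)%N & K \subset K'] ==> (K' == K)]].

Definition is_odd_cycle n (e : rel 'I_n) (s : seq 'I_n) : bool :=
  [&& uniq s, (3 <= size s)%N, odd (size s) & cycle e s].

(* vertex x of V as a coordinate of V^- = 'I_n.+1 ; ord_max is -oo *)
Definition vtx n (x : 'I_n) : 'I_n.+1 := widen_ord (leqnSn n) x.

(* integer points g of the cone over P (homogenised with t = g(-oo)):
   g(-oo) >= 0 and g|_V / g(-oo) in P *)
Definition in_cone n (e : rel 'I_n) (k : stab_kind) (g : 'I_n.+1 -> int) : Prop :=
  let t := g ord_max in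
  let f := fun x : 'I_n => g (vtx x) in
  [/\ 0 <= t,
      (forall x, 0 <= f x /\ f x <= t),
      (k <> TSTAB -> forall K, is_clique e K -> \sum_(x in K) f x <= t),
      (k = TSTAB -> forall x y, e x y -> f x + f y <= t) &
      (k <> QSTAB -> forall s, is_odd_cycle e s ->
          2 * \sum_(x <- s) f x <= ((size s).-1)%:Z * t)].

(* (topological) interior of that (full dimensional) cone, for lattice points:
   some positive multiple N g has all N g +- e_j in the cone *)
Definition in_interior n (e : rel 'I_n) (k : stab_kind) (g : 'I_n.+1 -> int) : Prop :=
  exists N : nat, (0 < N)%N /\ forall j : 'I_n.+1,
    in_cone e k (fun i => N%:Z * g i + (if i == j then 1 else 0)) /\
    in_cone e k (fun i => N%:Z * g i - (if i == j then 1 else 0)).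

Definition expo n (m : 'X_{1..n.+1}) : 'I_n.+1 -> int := fun i => (m i)%:Z.

Section Ring.
Variables (Kf : fieldType) (n : nat) (e : rel 'I_n) (k : stab_kind).

(* the Ehrhart ring R = E_K[P] : K-span of the T^f, f in the cone *)
Definition in_R (p : {mpoly Kf[n.+1]}) : Prop :=
  forall m, m \in msupp p -> in_cone e k (expo m).

Definition in_R_ge (d : nat) (p : {mpoly Kf[n.+1]}) : Prop :=
  in_R p /\ forall m, m \in msupp p -> (d <= m ord_max)%N.

(* canonical module omega_R (Danilov--Stanley): span of interior monomials *)
Definition in_omega (p : {mpoly Kf[n.+1]}) : Prop :=
  forall m, m \in msupp p -> in_interior e k (expo m).

Definition is_hom_omega (phi : {mpoly Kf[n.+1]} -> {mpoly Kf[n.+1]}) : Prop :=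
  [/\ (forall x, in_omega x -> in_R (phi x)),
      (forall x y, in_omega x -> in_omega y -> phi (x + y) = phi x + phi y) &
      (forall r x, in_R r -> in_omega x -> phi (r * x) = r * phi x)].

Definition in_trace_omega (p : {mpoly Kf[n.+1]}) : Prop :=
  exists s : seq (({mpoly Kf[n.+1]} -> {mpoly Kf[n.+1]}) * {mpoly Kf[n.+1]}),
    (forall q, List.In q s -> is_hom_omega q.1 /\ in_omega q.2) /\
    p = \sum_(q <- s) q.1 q.2.

End Ring.

(* Let phi : omega_R -> R be R-linear; it suffices to bound the exponents of
   phi(T^a) for interior a.  For interior a and b, both T^a and T^b lie in R and
   in omega_R, so phi(T^a) T^b = phi(T^b) T^a: every exponent m of phi(T^a)
   satisfies b + m = a + m' for some exponent m' of phi(T^b), and m' lies in the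
   cone.  Taking b = (1, ..., 1; n + 4) gives m >= a - 1 on the vertices.  Taking
   b = M on K2, 1 on the other vertices and M #K2 + 1 at -oo, the clique
   inequality of K2 at m' reads #K2 (M - 1) <= M #K2 + 1 + m(-oo) - a(-oo), while
   a(-oo) > sum_(x in K1) a(x) >= #K1; hence m(-oo) >= #K1 - #K2. *)

From HB Require Import structures.
From mathcomp Require Import all_boot all_order all_algebra.
From mathcomp Require Import mpoly.
From mathcomp Require Import zify.
Import Order.TTheory GRing.Theory Num.Theory.
Local Open Scope ring_scope.
Set Implicit Arguments. Unset Strict Implicit. Unset Printing Implicit Defensive.

Lemma Posz_sum (I : Type) (r : seq I) (P : pred I) (F : I -> nat) :
  (\sum_(i <- r | P i) F i)%N%:Z = \sum_(i <- r | P i) (F i)%:Z.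
Proof. by rewrite (big_morph Posz PoszD (erefl _)). Qed.

Lemma vtx_neq_max n (x : 'I_n) : (vtx x == ord_max) = false.
Proof. by apply/negbTE; rewrite -val_eqE /= neq_ltn ltn_ord. Qed.

Lemma vtx_inj n : injective (@vtx n).
Proof. by move=> x y /(congr1 val) /= /val_inj. Qed.

Lemma vtx_or_max n (j : 'I_n.+1) : j = ord_max \/ exists x : 'I_n, j = vtx x.
Proof.
case: (ltnP j n) => [lt_jn | le_nj].
  by right; exists (Ordinal lt_jn); apply/val_inj.
by left; apply/val_inj/eqP; rewrite /= eqn_leq le_nj andbT -ltnS ltn_ord.
Qed.

Lemma card_le_ord n (A : {set 'I_n}) : (#|A| <= n)%N.
Proof. by rewrite (leq_trans (max_card _)) ?card_ord. Qed.

Section Cone.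

Variables (n : nat) (e : rel 'I_n).
Hypotheses (e_sym : forall x y, e x y = e y x) (e_irr : irreflexive e).
Variable k : stab_kind.

Lemma cliqueP (K : {set 'I_n}) :
  reflect {in K &, forall x y, x != y -> e x y} (is_clique e K).
Proof.
apply: (iffP forall_inP) => [H x y xK yK | H x xK].
  by move: (H x xK) => /forall_inP /(_ y yK) /implyP.
by apply/forall_inP => y yK; apply/implyP; apply: H.
Qed.

Lemma clique_set1 x : is_clique e [set x].
Proof. by apply/cliqueP => a b /set1P -> /set1P ->; rewrite eqxx. Qed.

Lemma clique_set2 x y : e x y -> is_clique e [set x; y].
Proof.
move=> exy; apply/cliqueP => a b; rewrite !inE.
by case/orP => /eqP -> /orP [] /eqP ->; rewrite ?eqxx // e_sym.
Qed.

Lemma clique_triangle x y z :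
  cycle e [:: x; y; z] -> is_clique e [set w in [:: x; y; z]].
Proof.
move=> /= /and4P [exy eyz ezx _]; apply/cliqueP => a b; rewrite !inE.
by move=> /or3P [] /eqP -> /or3P [] /eqP ->; rewrite ?eqxx // e_sym.
Qed.

(* The cliques whose inequalities appear in the description of the polytope:
   for TSTAB only those of size at most 3, i.e. the elements of calK(G). *)
Definition admissible_clique (K : {set 'I_n}) : bool :=
  is_clique e K && (if k is TSTAB then #|K| <= 3 else true)%N.

Definition maximal_admissible (K : {set 'I_n}) : Prop :=
  admissible_clique K /\
  forall K', admissible_clique K' -> K \subset K' -> K' = K.

Lemma maximal_admissibleP K :
  (if k is TSTAB then maximal_K3 e K else maximal_clique e K) ->
  maximal_admissible K.
Proof.
rewrite /maximal_admissible /admissible_clique; case: k => /=.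
1,2: case/andP => -> /forallP maxK; split=> // K' /andP [cK' _] sKK';
  by apply/eqP; apply: (implyP (maxK K')); rewrite cK'.
case/and3P => -> -> /forallP maxK; split=> // K' /andP [cK' K'3] sKK'.
by apply/eqP; apply: (implyP (maxK K')); rewrite cK' K'3.
Qed.

Lemma admissible_set1 x : admissible_clique [set x].
Proof. by rewrite /admissible_clique clique_set1 cards1; case: k. Qed.

Lemma maximal_admissible_gt0 K (x : 'I_n) : maximal_admissible K -> (0 < #|K|)%N.
Proof.
case=> _ maxK; rewrite card_gt0; apply/negP => /eqP K0.
have := maxK _ (admissible_set1 x); rewrite K0 sub0set => /(_ isT) /setP /(_ x).
by rewrite !inE eqxx.
Qed.

Lemma in_cone_clique_sum g K :
  in_cone e k g -> admissible_clique K -> \sum_(x in K) g (vtx x) <= g ord_max.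
Proof.
case=> t_ge0 g_vtx g_clique g_edge g_cycle /andP [cK sizeK].
case: k g_clique g_edge g_cycle sizeK => g_clique g_edge g_cycle sizeK.
1,2: exact: g_clique.
(* For TSTAB, cliques of size 2 and 3 are bounded by edge and triangle inequalities. *)
have TQ : TSTAB <> QSTAB by [].
have {}g_edge := g_edge erefl; have {}g_cycle := g_cycle TQ.
case: (cards_eqP K) cK sizeK => s uniq_s cK sizeK.
rewrite (eq_bigl (mem s)) => [|x]; last by rewrite inE.
rewrite -big_uniq //.
have edge x y : x \in s -> y \in s -> x != y -> e x y.
  by move: cK => /cliqueP cK xs ys; apply: cK; rewrite inE.
move: uniq_s edge sizeK; clear cK; case: s => [|x [|y [|z [|? ?]]]] //=.
- by rewrite big_nil.
- by rewrite big_seq1; case: (g_vtx x).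
- rewrite inE andbT => xy edge _; rewrite !big_cons big_nil addr0.
  by apply: g_edge; apply: edge; rewrite ?inE ?eqxx ?orbT.
- rewrite !inE !negb_or andbT => /andP [/andP [xy xz] yz] edge _.
  have cyc : is_odd_cycle e [:: x; y; z].
    rewrite /is_odd_cycle /= !inE !negb_or xy xz yz /= andbT.
    by apply/and3P; split; apply: edge; rewrite ?inE ?eqxx ?orbT // eq_sym.
  by have := g_cycle _ cyc; rewrite /= !big_cons big_nil addr0; lia.
Qed.

Lemma eq_in_cone g h : g =1 h -> in_cone e k g -> in_cone e k h.
Proof.
move=> gh [t_ge0 g_vtx g_clique g_edge g_cycle]; split; rewrite -?gh //.
- by move=> x; rewrite -!gh.
- by move=> kT K cK; under eq_bigr do rewrite -gh; apply: g_clique.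
- by move=> kT x y exy; rewrite -!gh; apply: g_edge.
- by move=> kQ s cyc; under eq_bigr do rewrite -gh; apply: g_cycle.
Qed.

(* A sufficient condition for g + e_j and g - e_j to lie in the cone for every j. *)
Definition in_cone_strict (g : 'I_n.+1 -> int) : Prop :=
  let t := g ord_max in
  let f := fun x : 'I_n => g (vtx x) in
  [/\ 1 <= t, (forall x, 1 <= f x /\ f x + 1 <= t),
      (k <> TSTAB -> forall K, is_clique e K -> \sum_(x in K) f x + 1 <= t),
      (k = TSTAB -> forall x y, e x y -> f x + f y + 1 <= t) &
      (k <> QSTAB -> forall s, is_odd_cycle e s ->
          2 * \sum_(x <- s) f x <= ((size s).-1)%:Z * (t - 1))].

Lemma sum_delta_vtx_le1 (j : 'I_n.+1) (r : seq 'I_n) : uniq r ->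
  (if ord_max == j then 1 else 0) + \sum_(x <- r) (if vtx x == j then 1 else 0)
  <= 1 :> int.
Proof.
have [-> _ | [x0 ->] uniq_r] := vtx_or_max j.
  by rewrite eqxx big1 // => x _; rewrite vtx_neq_max.
rewrite eq_sym vtx_neq_max add0r; elim: r uniq_r => [|x r IH]; first by rewrite big_nil.
case/andP => x_notin_r uniq_r; rewrite big_cons (inj_eq (@vtx_inj n)).
have [<- | _] := eqVneq x x0; last by rewrite add0r IH.
rewrite big1_seq ?addr0 // => y /andP [_ y_r]; rewrite (inj_eq (@vtx_inj n)).
by case: eqVneq y_r x_notin_r => // -> ->.
Qed.

Lemma in_cone_strict_shift g (c : int) j :
  in_cone_strict g -> (c = 1 \/ c = -1) ->
  in_cone e k (fun i => g i + c * (if i == j then 1 else 0)).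
Proof.
case=> t_ge1 g_vtx g_clique g_edge g_cycle c_unit.
set dt := (if ord_max == j then 1 else 0) : int.
set D := fun r : seq 'I_n => \sum_(x <- r) (if vtx x == j then 1 else 0) : int.
have D_bound r : uniq r -> 0 <= D r /\ dt + D r <= 1.
  move=> uniq_r; split; last exact: sum_delta_vtx_le1.
  by apply: sumr_ge0 => x _; case: ifP.
have dt_01 : 0 <= dt <= 1 by rewrite /dt; case: ifP.
have sum_shift r : \sum_(x <- r) (g (vtx x) + c * (if vtx x == j then 1 else 0))
                   = \sum_(x <- r) g (vtx x) + c * D r.
  by rewrite big_split mulr_sumr.
split => /=; rewrite -/dt.
- by case: c_unit => ->; lia.
- move=> x; have [_] := D_bound [:: x] isT; rewrite /D big_seq1.
  by have := g_vtx x; case: c_unit => ->; case: ifP => _; lia.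
- move=> kT K cK; rewrite big_split -mulr_sumr /=.
  have := D_bound (enum K) (enum_uniq K); rewrite /D big_enum /=.
  have := g_clique kT K cK; set S := \sum_(x in K) _; set DK := \sum_(x in K) _.
  by case: c_unit => ->; lia.
- move=> kT x y exy; have xy : x != y by apply: contraTneq exy => ->; rewrite e_irr.
  have := D_bound [:: x; y]; rewrite /D /= inE xy !big_cons big_nil addr0 => /(_ isT).
  by have := g_edge kT x y exy; case: c_unit => ->; lia.
- move=> kQ s cyc; have /and4P [uniq_s size_s _ _] := cyc; rewrite sum_shift.
  have := g_cycle kQ s cyc; have := D_bound s uniq_s.
  case: (size s) size_s => // L size_s; rewrite succnK.
  by case: c_unit => ->; nia.
Qed.

Lemma in_cone_strict_interior g : in_cone_strict g -> in_interior e k g.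
Proof.
move=> g_strict; exists 1%N; split=> // j; split.
- apply: eq_in_cone (in_cone_strict_shift j g_strict (or_introl erefl)) => i.
  by rewrite !mul1r.
- apply: eq_in_cone (in_cone_strict_shift j g_strict (or_intror erefl)) => i.
  by rewrite mul1r mulN1r.
Qed.

Lemma in_cone_unscale g (N : nat) : (0 < N)%N ->
  in_cone e k (fun i => N%:Z * g i - (if i == ord_max then 1 else 0)) ->
  in_cone e k g.
Proof.
move=> N_gt0 [t_ge0 g_vtx g_clique g_edge g_cycle].
rewrite eqxx in t_ge0 g_vtx g_clique g_edge g_cycle.
have N_gt0' : 0 < N%:Z by rewrite ltz_nat.
have unscale a b : N%:Z * a <= N%:Z * b - 1 -> a <= b by nia.
have vtx0 x : (if vtx x == ord_max then 1 else 0) = 0 :> int by rewrite vtx_neq_max.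
split.
- by apply: (unscale 0); rewrite mulr0.
- by move=> x; have := g_vtx x; rewrite vtx0 subr0 => -[? /unscale]; split; nia.
- move=> kT K cK; apply: unscale; have := g_clique kT K cK.
  by under eq_bigr do rewrite vtx0 subr0; rewrite mulr_sumr.
- move=> kT x y exy; apply: unscale; have := g_edge kT x y exy.
  by rewrite !vtx0 !subr0 mulrDr.
- move=> kQ s cyc; have := g_cycle kQ s cyc.
  under eq_bigr do rewrite vtx0 subr0; rewrite -mulr_sumr.
  set S := \sum_(x <- s) _; set L := ((size s).-1)%:Z; have : 0 <= L by [].
  by nia.
Qed.

Lemma interior_in_cone g : in_interior e k g -> in_cone e k g.
Proof. by case=> N [N_gt0 /(_ ord_max) [_]]; apply: in_cone_unscale. Qed.

Lemma interior_vtx_gt0 g x : in_interior e k g -> 0 < g (vtx x).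
Proof.
case=> N [N_gt0 /(_ (vtx x)) [_ [_ g_vtx _ _ _]]]; have [] := g_vtx x.
have N_gt0' : 0 < N%:Z by rewrite ltz_nat.
by rewrite eqxx; nia.
Qed.

Lemma interior_clique_sum_lt g K :
  in_interior e k g -> admissible_clique K -> \sum_(x in K) g (vtx x) < g ord_max.
Proof.
case=> N [N_gt0 /(_ ord_max) [_ /in_cone_clique_sum sum_le]] /sum_le.
rewrite eqxx; under eq_bigr do rewrite vtx_neq_max subr0.
have N_gt0' : 0 < N%:Z by rewrite ltz_nat.
rewrite -mulr_sumr; set S := \sum_(x in K) _.
by nia.
Qed.

Section CliqueWeight.

Variables (M : nat) (K2 : {set 'I_n}).
Hypotheses (M_gt : (2 * n < M)%N) (maxK2 : maximal_admissible K2).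

(* Interior because K2 is maximal (clique inequalities) and M > 2n (odd cycle
   inequalities). *)
Definition clique_weight (i : 'I_n.+1) : nat :=
  if i == ord_max then (M * #|K2|).+1
  else if i \in [set vtx x | x in K2] then M else 1.

Lemma clique_weight_max : clique_weight ord_max = (M * #|K2|).+1.
Proof. by rewrite /clique_weight eqxx. Qed.

Lemma clique_weight_vtx x : clique_weight (vtx x) = if x \in K2 then M else 1%N.
Proof. by rewrite /clique_weight vtx_neq_max mem_imset //; apply: vtx_inj. Qed.

Lemma sum_clique_weight (A : {set 'I_n}) :
  (\sum_(x in A) clique_weight (vtx x) = M * #|A :&: K2| + #|A :\: K2|)%N.
Proof.
rewrite (big_setID K2) /= (eq_bigr (fun _ => M)) => [|x]; last first.
  by rewrite inE clique_weight_vtx => /andP [_ ->].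
rewrite [X in (_ + X)%N](eq_bigr (fun _ => 1%N)) => [|x]; last first.
  by rewrite inE clique_weight_vtx => /andP [/negbTE ->].
by rewrite !sum_nat_const muln1 mulnC.
Qed.

Lemma admissible_meet_maximal A :
  admissible_clique A -> A \subset K2 \/ (#|A :&: K2| < #|K2|)%N.
Proof.
move=> admA; have [|not_sub] := boolP (A \subset K2); [by left | right].
apply: proper_card; rewrite properEneq subsetIr andbT.
apply: contraNneq not_sub => AK2; have [_ maxK] := maxK2.
by rewrite -(maxK A admA) // -AK2 subsetIl.
Qed.

Lemma clique_weight_sum_le A :
  admissible_clique A -> (\sum_(x in A) clique_weight (vtx x) <= M * #|K2|)%N.
Proof.
move=> /admissible_meet_maximal [sub | lt_meet]; rewrite sum_clique_weight.
  move: sub; rewrite -setD_eq0 => /eqP ->; rewrite cards0 addn0 leq_mul2l.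
  by rewrite subset_leq_card ?subsetIr ?orbT.
by have := card_le_ord (A :\: K2); nia.
Qed.

Lemma odd_cycle_meet_maximal s : is_odd_cycle e s ->
  (2 * #|[set x in s] :&: K2| < (size s).-1 * #|K2|)%N \/ [set x in s] = K2.
Proof.
move=> /and4P [uniq_s size_s odd_s cycle_s]; set S := [set x in s].
have K2_gt0 : (0 < #|K2|)%N.
  case: s {uniq_s odd_s cycle_s S} size_s => // x s _.
  exact: maximal_admissible_gt0 x maxK2.
have L_ge2 : (2 <= (size s).-1)%N by case: (size s) size_s => [|[|[|]]].
have [sub | not_sub] := boolP (K2 \subset S); last first.
  left; have : (#|S :&: K2| < #|K2|)%N.
    apply: proper_card; rewrite properEneq subsetIr andbT.
    by apply: contraNneq not_sub => <-; rewrite subsetIl.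
  by nia.
have [size3 | size_ne3] := eqVneq (size s) 3%N.
  right; apply: (maxK2.2 S) => //.
  have cS : is_clique e S.
    rewrite /S; clear S sub; move: size3 cycle_s.
    by case: s {uniq_s size_s odd_s L_ge2} => [|x [|y [|z []]]] // _ /clique_triangle.
  by rewrite /admissible_clique cS cardsE (card_uniqP uniq_s) size3; case: k.
left; have : (#|S :&: K2| <= #|K2|)%N by rewrite subset_leq_card ?subsetIr.
have : (5 <= size s)%N.
  by case: (size s) size_s odd_s size_ne3 => [|[|[|[|[|?]]]]].
by nia.
Qed.

Lemma clique_weight_odd_cycle s : is_odd_cycle e s ->
  (2 * \sum_(x <- s) clique_weight (vtx x) <= (size s).-1 * (M * #|K2|))%N.
Proof.
move=> cyc; have /and4P [uniq_s size_s _ _] := cyc.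
rewrite big_uniq // (eq_bigl (fun x => x \in [set x in s])) => [|x]; last first.
  by rewrite !inE.
rewrite sum_clique_weight; case: (odd_cycle_meet_maximal cyc) => [lt_meet | ->].
  have := card_le_ord ([set x in s] :\: K2).
  rewrite mulnCA => le_d; apply: leq_trans (leq_mul (leqnn M) lt_meet).
  by set c := #|_ :&: K2|; set d := #|_ :\: K2| in le_d *; lia.
rewrite setIid setDv cards0 addn0 leq_mul2r.
by case: (size s) size_s => [|[|[|]]] // L _; rewrite orbT.
Qed.

Lemma clique_weight_strict : in_cone_strict (fun i => (clique_weight i)%:Z).
Proof.
split=> /=; rewrite clique_weight_max.
- by [].
- move=> x; have := clique_weight_sum_le (admissible_set1 x).
  by rewrite big_set1 clique_weight_vtx; case: ifP => _ ?; split; lia.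
- move=> kT K cK; have admK : admissible_clique K.
    by rewrite /admissible_clique cK; case: k kT.
  by rewrite -Posz_sum -PoszD lez_nat addn1 ltnS; apply: clique_weight_sum_le.
- move=> kT x y exy; have xy : x != y by apply: contraTneq exy => ->; rewrite e_irr.
  have admxy : admissible_clique [set x; y].
    by rewrite /admissible_clique clique_set2 // cards2 xy kT.
  have := clique_weight_sum_le admxy; rewrite big_setU1 ?inE //= big_set1.
  by rewrite -!PoszD lez_nat addn1 ltnS.
- move=> kQ s cyc; have := clique_weight_odd_cycle cyc.
  by rewrite -Posz_sum; nia.
Qed.

End CliqueWeight.

Definition unit_weight (i : 'I_n.+1) : nat := if i == ord_max then n.+4 else 1.

Lemma unit_weight_strict : in_cone_strict (fun i => (unit_weight i)%:Z).
Proof.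
have w_vtx x : unit_weight (vtx x) = 1%N by rewrite /unit_weight vtx_neq_max.
have w_max : unit_weight ord_max = n.+4 by rewrite /unit_weight eqxx.
split=> /=; rewrite w_max //.
- by move=> x; rewrite w_vtx; split; lia.
- move=> kT K cK; under eq_bigr do rewrite w_vtx.
  rewrite -Posz_sum sum_nat_const muln1 -PoszD lez_nat.
  by rewrite addn1 ltnS; apply: leq_trans (card_le_ord K) _; lia.
- by move=> kT x y _; rewrite !w_vtx; lia.
- move=> kQ s /and4P [_ size_s _ _]; under eq_bigr do rewrite w_vtx.
  by rewrite -Posz_sum sum1_size; nia.
Qed.

End Cone.

Lemma eq_in_interior n (e : rel 'I_n) k g h :
  g =1 h -> in_interior e k g -> in_interior e k h.
Proof.
move=> gh [N [N_gt0 cone_pm]]; exists N; split=> // j.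
have [cone_plus cone_minus] := cone_pm j.
split; [apply: eq_in_cone cone_plus | apply: eq_in_cone cone_minus] => i /=;
  by rewrite gh.
Qed.

Lemma in_cone0 n (e : rel 'I_n) k : in_cone e k (fun _ => 0).
Proof. by split=> // [_ K _ | _ s _]; rewrite big1 ?mulr0. Qed.

Section EhrhartTrace.

Variables (Kf : fieldType) (n : nat) (e : rel 'I_n).
Hypotheses (e_sym : forall x y, e x y = e y x) (e_irr : irreflexive e).
Variable k : stab_kind.

Local Notation mpoly := {mpoly Kf[n.+1]}.

Definition msupp_all (P : 'X_{1..n.+1} -> Prop) (p : mpoly) : Prop :=
  forall m, m \in msupp p -> P m.

Lemma msupp_all0 P : msupp_all P 0.
Proof. by move=> m; rewrite mcoeff_msupp mcoeff0 eqxx. Qed.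

Lemma msupp_allD P p q : msupp_all P p -> msupp_all P q -> msupp_all P (p + q).
Proof. by move=> Pp Pq m /msuppD_le; rewrite mem_cat => /orP [/Pp | /Pq]. Qed.

Lemma msupp_allZ P c p : msupp_all P p -> msupp_all P (c *: p).
Proof. by move=> Pp m /msuppZ_le /Pp. Qed.

Lemma msupp_all_sum P (I : Type) (r : seq I) (F : I -> mpoly) :
  (forall i, List.In i r -> msupp_all P (F i)) -> msupp_all P (\sum_(i <- r) F i).
Proof.
elim: r => [|i r IH] PF; first by rewrite big_nil; apply: msupp_all0.
rewrite big_cons; apply: msupp_allD; first exact: PF (or_introl _).
by apply: IH => j rj; apply: PF (or_intror _).
Qed.

Lemma in_R_X a : in_interior e k (expo a) -> in_R e k ('X_[a] : mpoly).
Proof. by move=> int_a m; rewrite msuppX inE => /eqP ->; apply: interior_in_cone. Qed.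

Lemma in_omega_X a : in_interior e k (expo a) -> in_omega e k ('X_[a] : mpoly).
Proof. by move=> int_a m; rewrite msuppX inE => /eqP ->. Qed.

Lemma in_R_C c : in_R e k (c%:MP : mpoly).
Proof.
move=> m; rewrite msuppC; case: eqP => // _; rewrite inE => /eqP ->.
by apply: eq_in_cone (in_cone0 _ _) => i; rewrite /expo mnm0E.
Qed.

Section Hom.

Variable phi : mpoly -> mpoly.
Hypothesis hom_phi : is_hom_omega e k phi.

Lemma hom_omega0 : phi 0 = 0.
Proof.
have [_ phiD _] := hom_phi.
have omega0 := msupp_all0 (fun m => in_interior e k (expo m)).
have := phiD _ _ omega0 omega0; rewrite addr0 => /(congr1 (fun y => y - phi 0)).
by rewrite subrr addrK.
Qed.

Lemma hom_omegaZX c a :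
  in_interior e k (expo a) -> phi (c *: 'X_[a]) = c *: phi 'X_[a].
Proof.
have [_ _ phiM] := hom_phi.
by move=> int_a; rewrite -!mul_mpolyC; exact: phiM _ _ (@in_R_C c) (in_omega_X int_a).
Qed.

Lemma hom_omega_mpolyE x :
  in_omega e k x -> phi x = \sum_(m <- msupp x) x@_m *: phi 'X_[m].
Proof.
have [_ phiD _] := hom_phi.
move=> omega_x; rewrite {1}(mpolyE x); move: omega_x; rewrite /in_omega.
elim: (msupp x) => [|m r IH] omega_r; first by rewrite !big_nil hom_omega0.
have int_m : in_interior e k (expo m) by apply: omega_r; rewrite inE eqxx.
have {}omega_r m' : m' \in r -> in_interior e k (expo m').
  by move=> r_m'; apply: omega_r; rewrite inE r_m' orbT.
have omega_m : in_omega e k (x@_m *: 'X_[m]) by apply: msupp_allZ; apply: in_omega_X.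
have omega_rest : in_omega e k (\sum_(m' <- r) x@_m' *: 'X_[m']).
  rewrite big_seq; apply: (big_ind (msupp_all _)) => [|? ?|m' r_m'].
  - exact: msupp_all0.
  - exact: msupp_allD.
  - by apply: msupp_allZ; apply/in_omega_X/omega_r.
by rewrite !big_cons phiD // hom_omegaZX // IH.
Qed.

Lemma hom_omega_msupp_shift a b m :
  in_interior e k (expo a) -> in_interior e k (expo b) ->
  m \in msupp (phi 'X_[a]) ->
  exists2 m', m' \in msupp (phi 'X_[b]) & (b + m = a + m')%MM.
Proof.
have [_ _ phiM] := hom_phi.
move=> int_a int_b phi_a_m.
have comm : phi 'X_[a] * 'X_[b] = phi 'X_[b] * 'X_[a].
  rewrite [LHS]mulrC -(phiM _ _ (in_R_X int_b) (in_omega_X int_a)) mulrC.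
  by rewrite (phiM _ _ (in_R_X int_a) (in_omega_X int_b)) mulrC.
have : (b + m)%MM \in msupp (phi 'X_[a] * 'X_[b]).
  by rewrite (perm_mem (msuppMX _ _)) map_f.
by rewrite comm (perm_mem (msuppMX _ _)) => /mapP [m' ? ->]; exists m'.
Qed.

Lemma hom_omega_msupp_vtx_le a m x :
  in_interior e k (expo a) -> m \in msupp (phi 'X_[a]) ->
  (a (vtx x) <= (m (vtx x)).+1)%N.
Proof.
move=> int_a phi_a_m; set u : 'X_{1..n.+1} := [multinom unit_weight i | i < n.+1].
have int_u : in_interior e k (expo u).
  apply: (eq_in_interior (g := fun i => (unit_weight i)%:Z)) => [i|].
    by rewrite /expo mnmE.
  exact/(in_cone_strict_interior e_irr)/unit_weight_strict.
have [m' _ shift] := hom_omega_msupp_shift int_a int_u phi_a_m.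
have := congr1 (fun m : 'X_{1..n.+1} => m (vtx x)) shift.
by rewrite /= !mnmDE mnmE /unit_weight vtx_neq_max; lia.
Qed.

Lemma hom_omega_deg_ge a m K1 K2 :
  in_interior e k (expo a) -> admissible_clique e k K1 -> maximal_admissible e k K2 ->
  m \in msupp (phi 'X_[a]) -> (#|K1| - #|K2| <= m ord_max)%N.
Proof.
move=> int_a admK1 maxK2 phi_a_m; pose M := (2 * n).+1.
set w : 'X_{1..n.+1} := [multinom clique_weight M K2 i | i < n.+1].
have int_w : in_interior e k (expo w).
  apply: (eq_in_interior (g := fun i => (clique_weight M K2 i)%:Z)) => [i|].
    by rewrite /expo mnmE.
  exact/(in_cone_strict_interior e_irr)/
    (clique_weight_strict e_sym e_irr (ltnSn _) maxK2).
have [m2 phi_w_m2 shift] := hom_omega_msupp_shift int_a int_w phi_a_m.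
have coord i : (clique_weight M K2 i + m i = a i + m2 i)%N.
  by have := congr1 (fun m : 'X_{1..n.+1} => m i) shift; rewrite /= !mnmDE mnmE.
have m2_clique : (\sum_(x in K2) m2 (vtx x) <= m2 ord_max)%N.
  have [phiR _ _] := hom_phi.
  have cone_m2 : in_cone e k (expo m2) := phiR _ (in_omega_X int_w) _ phi_w_m2.
  by have := in_cone_clique_sum cone_m2 maxK2.1; rewrite /expo -Posz_sum lez_nat.
have m2_K2 : (#|K2| * M <= \sum_(x in K2) m2 (vtx x) + #|K2|)%N.
  rewrite -sum_nat_const -sum1_card -big_split /=; apply: leq_sum => x xK2.
  have := coord (vtx x); have := hom_omega_msupp_vtx_le x int_a phi_a_m.
  by rewrite clique_weight_vtx xK2; lia.
have a_K1 : (#|K1| < a ord_max)%N.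
  have := interior_clique_sum_lt int_a admK1; rewrite /expo -Posz_sum ltz_nat.
  apply: leq_trans; rewrite ltnS -sum1_card; apply: leq_sum => x _.
  by have := interior_vtx_gt0 x int_a; rewrite /expo ltz_nat.
by have := coord ord_max; rewrite clique_weight_max; lia.
Qed.

End Hom.

End EhrhartTrace.

Unset Implicit Arguments.

Theorem lemma4p1 (Kf : fieldType) (n : nat) (e : rel 'I_n)
  (e_sym : forall x y, e x y = e y x) (e_irr : irreflexive e) (k : stab_kind)
  (K1 K2 : {set 'I_n}) :
  (if k is TSTAB then maximal_K3 e K1 && maximal_K3 e K2
   else maximal_clique e K1 && maximal_clique e K2) ->
  (#|K2| < #|K1|)%N ->
  forall p : {mpoly Kf[n.+1]}, in_trace_omega e k p ->
    in_R_ge e k (#|K1| - #|K2|) p.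
Proof.
(* The bound holds for any admissible K1; the size hypothesis only rules out the
   case where truncated subtraction makes it trivial. *)
move=> maxK _ p [s [hom_s ->]].
have [maxK1 maxK2] : maximal_admissible e k K1 /\ maximal_admissible e k K2.
  by move: maxK; clear; case: k => /andP [? ?]; split; apply: maximal_admissibleP.
split; apply: msupp_all_sum => -[phi x] /hom_s /= [hom_phi omega_x].
  by case: hom_phi => phiR _ _; apply: phiR.
rewrite (hom_omega_mpolyE hom_phi omega_x) big_seq.
apply: (big_ind (msupp_all _)) => [|? ?|m x_m].
- exact: msupp_all0.
- exact: msupp_allD.
- apply: msupp_allZ => m' phi_m'.
  exact: (hom_omega_deg_ge e_sym e_irr hom_phi (omega_x _ x_m) maxK1.1 maxK2 phi_m').
Qed.
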